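(* For Domineering on the $5 \times n$ board ($5$ rows, $n$ columns): the $5\times 1$ and $5 \times 3$ boards have outcome $V$, the $5\times 2$ and $5\times 4$ boards have outcome $H$, the $5 \times 5$ board has outcome ${\rm 2nd}$, and the $5 \times n$ board has outcome $H$ for every $n \ge 6$.
   Context: Domineering on an $m \times n$ board (a rectangle of $m$ rows and $n$ columns of unit cells): two players, Vera and Hepzibah, alternately place dominoes on empty cells; Vera places vertical dominoes (covering two vertically adjacent empty cells), Hepzibah places horizontal dominoes (covering two horizontally adjacent empty cells). A player who cannot move on her turn loses. The outcome class of a position is $V$ if Vera wins with optimal play regardless of who moves first, $H$ if Hepzibah wins regardless of who moves first, ${\rm 1st}$ if the player who moves first wins, and ${\rm 2nd}$ if the player who moves second wins. *)

From mathcomp Require Import all_boot.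
Set Implicit Arguments. Unset Strict Implicit. Unset Printing Implicit Defensive.

Inductive player := Vera | Hepzibah.

Definition opp (p : player) : player :=
  match p with Vera => Hepzibah | Hepzibah => Vera end.

(* A cell is (row, column). *)
Definition cell (m n : nat) := ('I_m * 'I_n)%type.

Definition move (m n : nat) (p : player) (x y : cell m n) (E : {set cell m n}) : Prop :=
  x \in E /\ y \in E /\
  match p with
  | Vera => x.2 = y.2 /\ (nat_of_ord y.1 = (nat_of_ord x.1).+1)
  | Hepzibah => x.1 = y.1 /\ (nat_of_ord y.2 = (nat_of_ord x.2).+1)
  end.

(* E is the set of empty cells.  winsFirst p E: the player p, to move at E,
   has a winning strategy; losesFirst p E: the player p, to move at E,
   loses against optimal play (every move leads to a win for the opponent;
   in particular a player with no move loses). *)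
Inductive winsFirst (m n : nat) (p : player) (E : {set cell m n}) : Prop :=
  | WinMove (x y : cell m n) :
      move p x y E -> losesFirst (opp p) (E :\ x :\ y) -> winsFirst p E
with losesFirst (m n : nat) (p : player) (E : {set cell m n}) : Prop :=
  | LoseAll :
      (forall x y : cell m n, move p x y E -> winsFirst (opp p) (E :\ x :\ y)) ->
      losesFirst p E.

Inductive outcome := OutV | OutH | OutFirst | OutSecond.

Definition has_outcome (m n : nat) (E : {set cell m n}) (o : outcome) : Prop :=
  match o with
  | OutV => winsFirst Vera E /\ losesFirst Hepzibah E
  | OutH => winsFirst Hepzibah E /\ losesFirst Vera E
  | OutFirst => winsFirst Vera E /\ winsFirst Hepzibah E
  | OutSecond => losesFirst Vera E /\ losesFirst Hepzibah E
  end.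

Definition board_outcome (m n : nat) (o : outcome) : Prop :=
  has_outcome [set: cell m n] o.

From mathcomp Require Import all_boot zify.
From Stdlib Require Strings.String Strings.Ascii.
Set Implicit Arguments. Unset Strict Implicit. Unset Printing Implicit Defensive.

(* The boards 5 x 1, ..., 5 x 5 are settled by exhaustive search: for each player
   moving first, a winning strategy or a refutation of every first move is stored
   as a certificate and checked by computation.  Wider boards are glued from these.
   Vera's vertical dominoes never straddle the seam between two boards placed side by
   side, so if Hepzibah wins 5 x a whoever starts and Vera loses 5 x b moving first,
   Hepzibah wins 5 x (a + b) whoever starts.  As 5 x 2 has outcome H and Vera loses
   5 x 5 moving first, the boards 5 x 2k (k >= 1) and 5 x (2k + 5) (k >= 1) have
   outcome H. *)

Lemma oppK : involutive opp. Proof. by case. Qed.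

Definition domino m n (p : player) (x y : cell m n) : Prop :=
  match p with
  | Vera => x.2 = y.2 /\ nat_of_ord y.1 = (nat_of_ord x.1).+1
  | Hepzibah => x.1 = y.1 /\ nat_of_ord y.2 = (nat_of_ord x.2).+1
  end.

Lemma card_setD2_lt (T : finType) (A : {set T}) x y :
  x \in A -> #|A :\ x :\ y| < #|A|.
Proof.
move=> Ax; rewrite (cardsD1 x A) Ax add1n ltnS.
exact/subset_leq_card/subD1set.
Qed.

Lemma imsetD1_inj (aT rT : finType) (f : aT -> rT) (A : {set aT}) x :
  injective f -> f @: (A :\ x) = f @: A :\ f x.
Proof.
move=> f_inj; apply/setP => z; rewrite !inE; apply/imsetP/andP.
- case=> w; rewrite !inE => /andP [w_x Aw] ->.
  by rewrite (inj_eq f_inj) w_x imset_f.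
- case=> z_fx /imsetP [w Aw z_fw]; exists w => //.
  by rewrite !inE Aw andbT -(inj_eq f_inj) -z_fw.
Qed.

Section Transport.
Variables (m n m' n' : nat) (f : cell m n -> cell m' n').
Hypothesis f_inj : injective f.
Hypothesis domino_f : forall p x y, domino p (f x) (f y) <-> domino p x y.

Lemma move_imset p x y (E : {set cell m n}) : move p (f x) (f y) (f @: E) <-> move p x y E.
Proof.
rewrite /move !mem_imset //.
by split=> -[Ex [Ey dom]]; do 2 (split; first done); apply/domino_f.
Qed.

Lemma outcome_imset p (E : {set cell m n}) :
  (winsFirst p E -> winsFirst p (f @: E)) /\ (losesFirst p E -> losesFirst p (f @: E)).
Proof.
have [K] := ubnP #|E|; elim: K p E => // K IH p E /ltnSE sizeE; split.
- case=> x y mv L; apply: (@WinMove _ _ _ _ (f x) (f y)); first exact/move_imset.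
  rewrite -!imsetD1_inj //; apply: (proj2 (IH _ _ _)) L.
  exact: leq_trans (card_setD2_lt y (proj1 mv)) sizeE.
- case=> W; constructor => _ _ [/imsetP [x Ex ->] [/imsetP [y Ey ->] /domino_f dom]].
  rewrite -!imsetD1_inj //; apply: (proj1 (IH _ _ _)) (W x y (conj Ex (conj Ey dom))).
  exact: leq_trans (card_setD2_lt y Ex) sizeE.
Qed.

End Transport.

Definition column_disjoint m n (A B : {set cell m n}) :=
  forall x y, x \in A -> y \in B -> x.2 != y.2.

Section ColumnSum.
Variables m n : nat.
Implicit Types (A B : {set cell m n}) (x y : cell m n).

Lemma column_disjoint_sym A B : column_disjoint A B -> column_disjoint B A.
Proof. by move=> disj x y Bx Ay; rewrite eq_sym disj. Qed.

Lemma column_disjoint_setD2 A B x y :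
  column_disjoint A B -> column_disjoint (A :\ x :\ y) B.
Proof. by move=> disj u v; rewrite !inE => /and3P [_ _ Au]; apply: disj. Qed.

Lemma column_disjoint_notin A B x : column_disjoint A B -> x \in A -> x \notin B.
Proof. by move=> disj Ax; apply/negP => /(disj _ _ Ax); rewrite eqxx. Qed.

Lemma setU_setD2 A B x y : column_disjoint A B -> x \in A -> y \in A ->
  (A :|: B) :\ x :\ y = (A :\ x :\ y) :|: B.
Proof.
move=> disj Ax Ay; apply/setP => z; rewrite !inE.
case: (eqVneq z y) => [->|_]; first by rewrite (negbTE (column_disjoint_notin disj Ay)).
by case: (eqVneq z x) => [->|_]; rewrite ?(negbTE (column_disjoint_notin disj Ax)).
Qed.

Lemma move_Vera_setU A B x y : column_disjoint A B ->
  move Vera x y (A :|: B) -> move Vera x y A \/ move Vera x y B.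
Proof.
move=> disj [ABx [ABy [col row]]]; move: ABx ABy; rewrite !inE.
case/orP=> [Ax|Bx] /orP [Ay|By].
- by left.
- by have := disj _ _ Ax By; rewrite col eqxx.
- by have := disj _ _ Ay Bx; rewrite col eqxx.
- by right.
Qed.

(* Only Vera's moves in A :|: B have to be split between A and B: Hepzibah's
   dominoes straddling the two are extra options she never needs. *)
Lemma setU_outcome A B : column_disjoint A B ->
  (losesFirst Vera A -> losesFirst Vera B -> losesFirst Vera (A :|: B)) /\
  (winsFirst Hepzibah A -> losesFirst Vera B -> winsFirst Hepzibah (A :|: B)).
Proof.
have [K] := ubnP (#|A| + #|B|); elim: K A B => // K IH A B /ltnSE sizeAB disj.
have sizeBA : #|B| + #|A| <= K by rewrite addnC.
have disj' := column_disjoint_sym disj.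
have shrink (C D : {set cell m n}) x y :
    x \in C -> #|C| + #|D| <= K -> #|C :\ x :\ y| + #|D| < K.
  by move=> /(card_setD2_lt y) ltC; apply: leq_trans; rewrite ltn_add2r.
split=> [[WA] [WB] | [x y mv LA] LB].
- constructor => x y /(move_Vera_setU disj) [mv | mv]; have [Ex [Ey _]] := mv.
  + have [_ WH] := IH _ _ (shrink _ _ _ y Ex sizeAB) (column_disjoint_setD2 disj).
    by rewrite (setU_setD2 disj Ex Ey); apply: WH (WA x y mv) (LoseAll WB).
  + have [_ WH] := IH _ _ (shrink _ _ _ y Ex sizeBA) (column_disjoint_setD2 disj').
    by rewrite setUC (setU_setD2 disj' Ex Ey); apply: WH (WB x y mv) (LoseAll WA).
- have [Ax [Ay dom]] := mv.
  have [LV _] := IH _ _ (shrink _ _ _ y Ax sizeAB) (column_disjoint_setD2 disj).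
  apply: (@WinMove _ _ _ _ x y); first by rewrite /move !inE Ax Ay.
  by rewrite (setU_setD2 disj Ax Ay); apply: LV LA LB.
Qed.

End ColumnSum.

Definition columns m n (c k : nat) : {set cell m n} :=
  [set x : cell m n | c <= x.2 < c + k].
Arguments columns : clear implicits.

Lemma columns_full m n : columns m n 0 n = [set: cell m n].
Proof. by apply/setP => x; rewrite !inE ltn_ord. Qed.

Lemma columnsD m n c a b :
  columns m n c (a + b) = columns m n c a :|: columns m n (c + a) b.
Proof.
by apply/setP => x; rewrite !inE; move: (nat_of_ord x.2) => j; apply/idP/idP; lia.
Qed.

Lemma column_disjoint_columns m n c a b :
  column_disjoint (columns m n c a) (columns m n (c + a) b).
Proof.
move=> x y; rewrite !inE => /andP [_ x_lt] /andP [y_ge _].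
by apply: contraTneq x_lt => ->; rewrite -leqNgt.
Qed.

Section Shift.
Variables (m k n c : nat) (c_k_n : c + k <= n).

Lemma shift_column_lt (j : 'I_k) : c + j < n.
Proof. by apply: leq_trans c_k_n; rewrite ltn_add2l. Qed.

Definition shift_cell (x : cell m k) : cell m n := (x.1, Ordinal (shift_column_lt x.2)).

Lemma shift_cell_inj : injective shift_cell.
Proof.
move=> [i j] [i' j'] [-> /addnI j_j']; congr pair; exact: val_inj.
Qed.

Lemma domino_shift_cell p x y : domino p (shift_cell x) (shift_cell y) <-> domino p x y.
Proof.
case: p => /=; split=> -[e1 e2]; split=> //.
- by apply: val_inj; move: e1 => /(congr1 val) /addnI.
- by apply: val_inj => /=; rewrite e1.
- by move: e2; rewrite -addnS => /addnI.
- by rewrite e2 addnS.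
Qed.

Lemma imset_shift_cell : shift_cell @: [set: cell m k] = columns m n c k.
Proof.
apply/setP => x; rewrite inE; apply/imsetP/idP => [[y _ ->] | ].
  by rewrite /shift_cell /= leq_addr ltn_add2l ltn_ord.
case: x => i j /= /andP [c_j j_ck].
have j_k : j - c < k by rewrite ltn_subLR.
exists (i, Ordinal j_k); first by rewrite inE.
by congr pair; apply: val_inj; rewrite /= subnKC.
Qed.

Lemma outcome_columns p :
  (winsFirst p [set: cell m k] -> winsFirst p (columns m n c k)) /\
  (losesFirst p [set: cell m k] -> losesFirst p (columns m n c k)).
Proof.
rewrite -imset_shift_cell.
exact: outcome_imset shift_cell_inj domino_shift_cell p [set: cell m k].
Qed.

End Shift.

Lemma board_outcomeH_glue m a b :
  board_outcome m a OutH -> losesFirst Vera [set: cell m b] -> board_outcome m (a + b) OutH.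
Proof.
move=> [Wa La] Lb; rewrite /board_outcome /= -columns_full columnsD.
have [LV WH] := setU_outcome (@column_disjoint_columns m (a + b) 0 a b).
have a_le : 0 + a <= a + b by rewrite leq_addr.
have [Wa' _] := outcome_columns m a_le Hepzibah.
have [_ La'] := outcome_columns m a_le Vera.
have [_ Lb'] := outcome_columns m (leqnn (a + b)) Vera.
by split; [apply: WH (Wa' Wa) (Lb' Lb) | apply: LV (La' La) (Lb' Lb)].
Qed.

Definition placeable (s : bitseq) (d : nat * nat) := nth false s d.1 && nth false s d.2.

Definition place (d : nat * nat) (s : bitseq) :=
  set_nth false (set_nth false s d.1 false) d.2 false.

Fixpoint answer_all (w : nat * nat -> seq nat -> option (seq nat)) (s : bitseq)
    (ds : seq (nat * nat)) (cs : seq nat) : option (seq nat) :=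
  if ds is d :: ds' then
    if placeable s d then obind (answer_all w s ds') (w d cs) else answer_all w s ds' cs
  else Some cs.

Lemma answer_all_Some w s ds cs cs' : answer_all w s ds cs = Some cs' ->
  forall d, d \in ds -> placeable s d -> exists cs0 cs1, w d cs0 = Some cs1.
Proof.
elim: ds cs => [|d ds IH] cs //= ans d'; rewrite in_cons.
case: (eqVneq d' d) => [-> _ ok | _ /= d'_ds ok]; move: ans.
  by rewrite ok; case E: (w d cs) => [cs1|] // _; exists cs, cs1.
case: (placeable s d) => [|/IH]; last exact.
by case: (w d cs) => [cs1|] //= /IH; apply.
Qed.

Section Encoding.
Variables m n : nat.

Definition cell_index (x : cell m n) : nat := x.1 * n + x.2.

Lemma cell_index_inj : injective cell_index.
Proof.
move=> [i j] [i' j']; rewrite /cell_index /= => e.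
have n_gt0 : 0 < n by case: n j {e} => [[]|].
have j_j' : j = j' :> nat by have := congr1 (modn^~ n) e; rewrite !modnMDl !modn_small.
have i_i' : i = i' :> nat.
  by have := congr1 (divn^~ n) e; rewrite !divnMDl // !divn_small // !addn0.
by congr pair; apply: val_inj.
Qed.

Definition position (s : bitseq) : {set cell m n} := [set x | nth false s (cell_index x)].

Lemma position_place s x y :
  position (place (cell_index x, cell_index y) s) = position s :\ x :\ y.
Proof.
apply/setP => z; rewrite !inE /place /= !nth_set_nth /= !(inj_eq cell_index_inj).
by case: (z == y); rewrite //= nth_set_nth /= (inj_eq cell_index_inj); case: (z == x).
Qed.

Lemma position_full : position (nseq (m * n) true) = [set: cell m n].
Proof.
apply/setP => x; rewrite !inE nth_nseq /cell_index.
have := ltn_ord x.1; have := ltn_ord x.2; move: (nat_of_ord x.1) (nat_of_ord x.2) => i j.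
by case: ifP => //; nia.
Qed.

Definition dominoes (p : player) : seq (nat * nat) :=
  match p with
  | Vera => [seq (r * n + c, r.+1 * n + c) | r <- iota 0 m.-1, c <- iota 0 n]
  | Hepzibah => [seq (r * n + c, (r * n + c).+1) | r <- iota 0 m, c <- iota 0 n.-1]
  end.

Lemma mem_dominoes p i j : (i, j) \in dominoes p ->
  exists x y, [/\ i = cell_index x, j = cell_index y & domino p x y].
Proof.
case: p => /allpairsP [[r c] [/= r_lt c_lt [-> ->]]]; move: r_lt c_lt; rewrite !mem_iota.
- move=> r_lt c_lt; have r_m : r < m by lia.
  have r1_m : r.+1 < m by lia.
  have c_n : c < n by lia.
  by exists (Ordinal r_m, Ordinal c_n), (Ordinal r1_m, Ordinal c_n).
- move=> r_lt c_lt; have r_m : r < m by lia.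
  have c_n : c < n by lia.
  have c1_n : c.+1 < n by lia.
  exists (Ordinal r_m, Ordinal c_n), (Ordinal r_m, Ordinal c1_n).
  by rewrite /cell_index /= addnS.
Qed.

Lemma domino_dominoes p x y : domino p x y -> (cell_index x, cell_index y) \in dominoes p.
Proof.
case: p => -[e1 e2]; apply/allpairsP; exists (nat_of_ord x.1, nat_of_ord x.2).
- by rewrite !mem_iota /cell_index e1 e2; split=> //=; have := ltn_ord y.1; lia.
- by rewrite !mem_iota /cell_index e1 e2 addnS; split=> //=; have := ltn_ord y.2; lia.
Qed.

Lemma move_position p s x y :
  move p x y (position s) <-> placeable s (cell_index x, cell_index y) /\ domino p x y.
Proof. by rewrite /move !inE /placeable; split=> [[-> [-> dom]] | [/andP [-> ->] dom]]. Qed.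

Lemma answer_all_losesFirst q s w cs cs' :
  (forall d cs cs', w d cs = Some cs' -> winsFirst (opp q) (position (place d s))) ->
  answer_all w s (dominoes q) cs = Some cs' -> losesFirst q (position s).
Proof.
move=> w_wins /answer_all_Some answered.
constructor => x y /move_position [ok /domino_dominoes dom].
by have [cs0 [cs1 /w_wins]] := answered _ dom ok; rewrite position_place.
Qed.

(* A certificate is a list of indices into [dominoes p]: [wins_cert] reads the
   winning move, then, for every placeable reply of the opponent in the order of
   [dominoes], a certificate for the resulting position, and returns the unread rest
   of the list.  The fuel bounds the depth of the strategy. *)
Fixpoint wins_cert (fuel : nat) (p : player) (s : bitseq) (cs : seq nat)
    : option (seq nat) :=
  match fuel, cs with
  | fuel'.+1, k :: cs' =>
      let d := nth (0, 0) (dominoes p) k in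
      if (k < size (dominoes p)) && placeable s d then
        let s' := place d s in
        answer_all (fun d' => wins_cert fuel' p (place d' s')) s' (dominoes (opp p)) cs'
      else None
  | _, _ => None
  end.

Definition loses_cert fuel p s :=
  answer_all (fun d => wins_cert fuel (opp p) (place d s)) s (dominoes p).

Lemma wins_cert_sound fuel p s cs cs' :
  wins_cert fuel p s cs = Some cs' -> winsFirst p (position s).
Proof.
elim: fuel p s cs cs' => [|fuel IH] p s [|k cs] cs' //=.
case: ifP => // /andP [k_lt]; move: (mem_nth (0, 0) k_lt).
case: (nth _ _ k) => _ _ /mem_dominoes [x [y [-> -> dom]]] ok ans.
apply: (@WinMove _ _ _ _ x y); first exact/move_position.
rewrite -position_place; apply: answer_all_losesFirst ans => d cs0 cs1 /IH.
by rewrite oppK.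
Qed.

Lemma loses_cert_sound fuel p s cs cs' :
  loses_cert fuel p s cs = Some cs' -> losesFirst p (position s).
Proof. by apply: answer_all_losesFirst => d cs0 cs1 /wins_cert_sound. Qed.

End Encoding.

(* Move index k is stored as the character of code 48 + k. *)
Fixpoint decode_cert (s : String.string) : seq nat :=
  if s is String.String c s' then (Ascii.nat_of_ascii c - 48) :: decode_cert s' else [::].

Lemma winsFirst_board m n p cert :
  isSome (wins_cert m n (m * n) p (nseq (m * n) true) (decode_cert cert)) ->
  winsFirst p [set: cell m n].
Proof.
by case E: wins_cert => // _; rewrite -position_full; apply: wins_cert_sound E.
Qed.
Arguments winsFirst_board {m n p} cert.

Lemma losesFirst_board m n p cert :
  isSome (loses_cert m n (m * n) p (nseq (m * n) true) (decode_cert cert)) ->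
  losesFirst p [set: cell m n].
Proof.
by case E: loses_cert => // _; rewrite -position_full; apply: loses_cert_sound E.
Qed.
Arguments losesFirst_board {m n p} cert.

Module Certificates.
Import Stdlib.Strings.String.

Definition wins_V_5x1 : string :=
  "0".
Definition loses_H_5x1 : string :=
  "".
Definition wins_V_5x3 : string :=
  "1::3;2553925577".
Definition loses_H_5x3 : string :=
  "4;29262624;09060607929526267939006061;09080801;09060601;0;03232190903232180603232180603232".
Definition wins_H_5x2 : string :=
  "140402020".
Definition loses_V_5x2 : string :=
  "324324340340100100100100".
Definition wins_H_5x4 : string :=
  "39;;>060067=0<806068=069;;1667=180617=19;;20206006=009;;1616<77=15;<>00202:;<8077:5;<>00202<>00202;80202<08==<09>06006166162597=0<7=120255;6=>0=:;6028002:;6080>8016>772600>0616>7755980606806120600616<75598=067=1=007=155".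
Definition loses_V_5x4 : string :=
  "49>1718171:>>61:81>227;<1<12<2=9>1>22697122:81>226;616127269811622697171262659>2728272:<82<:822727;<2<282889>2>26262:62<2762:82826262;62272762982826262:62<276239>0708070:>>60:80>0780;<0<080809>0>060669700606:80>0680;60608080980060680:6060808049>1718171:<80<:8100;<1<0089>1>00<0<:61<007:81800707;6107007981800707:61<0074:<80<:><;<<209>0>220:<2:80>220;07022098002220:<<205;<=188;=02;<09>1>00202:<1<002;==02;18802002981800202:<1<00239=066=902=:>0>220;<0<020209=2:>0>220;606020209066022209==204:>>61:><:>0;<1<0029>>02:>>02;61020029160202:61<002:481>2275822727380>078048100581003>0>2204>042042700;5<2115<2<282883<0<080804<1<0085<03<0<020204<1<002512851288094>1>2265>2>262623>0>060663>0114>0>2205>1>002023>13061306611:46122562<27623600706461<0074<25<1<0023602242042072:481>226582826262380>0680380>01616480>2205818002023>0>2203>>1642072380162016;461612726562272762360608080461070074070220518802002360602020461020024270038016201694811622658282626238006068048180070748002220581800202306602220306021642072380162016:461612726562<2762360608080461<0074<<205<1<002360602020461<00242700380162016".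
Definition loses_V_5x5 : string :=
  "<7>33?2?39A332@2@@2@>32?329A332@2@;2;>327>33>33?339A33A3C3@3@A3>33?339A33A3;3@3@A3>335>11>1?119A11A1A1C1@11@A11>1?119A11A1A1;1@1@A11>115>11>11?112C89@C89@>11?11:A112828828>117>33?1?31A33C3A33C3@3@A33>31?31:A331313313>317?2?1AC2C11313>21?21A;2;11313>215>11>1?11>1?119A11A13131@11@A11>115>1>1?112CC9@?11:A12828>117?3?33?351151151151159A11A1A1C1@11@A112C89@C89@2CC9@711311711711>627335151161721515?11?11?11?1171171171171179A332@2@;2;9A33A3;3@3@A3:A331313313A;2;113135115115115115>11>11>11>117117117117117<>33?2?39A332@2@@2@>32?329A332@2@;2;>32?<33=3=3:A33@3A3A33@3C33C<33=33:B33B3B3B3383C3C<33?=3<2:@32C2C<3=329B32;2;<32?<2<2=2B@2@2;2;;=22B822;2;82<22?=32=3=2:2@A32@2@;;@;B92;B32;92;@32;?:A332@2C2@C:A33@3A3A33@3C33C:@32C2CB@2@2;2;;:2@A32@2@;@;@;AA:2CA332C2CC2:@C:C@;C;;C:@:CC?<3<33<32@;;@;B2@;@;@;AA82;A32;28;;B;B8;<9A332@2@@2@9A33A33A33C3@3@3@@A339A332@2@@2@AC2C282822C8C@8@8@92@A332@2@@92@@C3@3@3@@2@@2@@2@@92@A332@2@@<>32>33>32>222B8B@8@8@92@A332@2@@:28C332@28@92@A332@2@@?=32=33=32=22:2CA332C2CC82;A32;92;B332;2;;29;9;8;C;C:CC9;;?9B332;2;2;;:B33B3B3B3383C3C9B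32;2;B822;2;8292;B32;28;;B;B8;92;B332;2;;29;;9;8;C;C9;9;;?<32<33<32<2292;@32;2:@C:C@;C;;C:@:CC29;9;8;C;C:CC9;;29;;9;8;C;C9;9;;<9A332@2@;2;9A33A33A33;3@3@3@@A339A332@2@;2;A;2;282822;8;@8@8;92@A332@2@@92@;;3@3@3@@2@;2@@2;;92;A332;2;;<>32>33>32>222;8;@8@8;92@A332@2@@:2883@3@2@28@92;A332;2;;4<>00>0?009A00A0A0C0@00@A00>0?009A00A0A0;0@0@A00>00?<00<00=00:A00A0A0@0C0C<00=00:B00B0B080C0C<00<>00>0?00>0?009A00A03030@00@A00>00<>0>0?003CC90?00:A03030>007>00?00=00=00>00?00=00=00>;C00C0C0@0B0B;C00C0C0@0B0B3C00C00@0C00@0B0BC@0@030307007007007007?00?00<00<00?00?00<00<00<9A00A0A0C0@00@A009A00A0C0@0@A03CC90700300700700<>0>00>07003007007007>00?00=00=00>00?00=00=00>;C00C0C080B0B;C00C0C080B0B3C00C0080C0080B0BC808030307007007007007?00?00<00<00?00?00<00<007=00:A00A00A00@0330303A00<00<00=008;0303:0303:0303303;0303:0303<00<007=00>00<00<00=00>00<00<004<>00>0?009A00A0A0C0@00@A00>0?009A00A0A0;0@0@A00>00<>00?0?09A001@1@@1@>00?009A001@1@;1;>00<?0>0AC0C08088>0?00A;00808;0>00<>0>0?09A01@1@?009A01@1@>00?=00=00=00=00:A001@1@1@@1@;@B;@;B9B001;1C1;C9@001;1C1;C?:A00A00A00A00@0C0C0CC:A001@1C1@CB@0@0;0;0: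A001@1C1@C:A001@1@1@@1@;@B;@;A:A001C1C1CC:@0C0C0CC1@C1@C1@@1CC<?00?0?01C8C8@8@@1B88@8@1;88@8@;8;B01818<9A00A0A0C0@00@A009A001@1@@1@AC0C080889A01@1@1C8C8@8@@9A01@1@19@@C8@88@9@9@9@@9A001@1@1@@<>0>00>01B88@8@9A01@1@:C018189A01@1@?=00=00=00=00:A001C1C1CC18;8B;A;89B001;1C1;C9;0C0C1;1C1;C?9B00B00B00B00;0CC0C0C9B001;1;1;;B8080;0;09B001C1C1CC9B001;1C1;C18;8B;B;89B001;1C1;C9;0CC0C0C1;;1CC1;C1;C<?00?00?00?0019@@C8@88@9@9@9@@:C0181819@;;8@8@9@9@9;@1:8;8@8@:89@@9;@<9A00A0A0;0@0@A009A001@1@;1;A;00808;09A01@1@1;88@8@;89A01@1@19@;;8@8@9@9@9;@9A001;1@1;@<>00>00>00>00;B018189A001@1@1@@1:8;8@8@:89@@9;@9A001;1@1;@?6<22<11=211:@@;:C@:<21=219B221;1;1;;<216<22=2=2:A22@2A2A22@2C22C<22=22:B22B2B2B2282C2C<224<00<00=00:A00A0A0@0C0C<00=00:B00B0B080C0C<004<00<0=00:A001@1C1@C<0=009B001;1;1;;<006=2=00@:2@<20=209B20202<206<11=0=1<10=10:B11B002B1002C22C<104<0<0=00B@0@02020=00B80802020<004<00<0=002A00A00@0A00@0C0C<0=009B001C1C1CC<00=5116240051614005161:@@;:C@::A22@2A2A22@2C22C0@:2@0224004004004<00<0<06006006006004=00=00=00=006006006006004:B00B0B080C0C9B001;1;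1;;B808020209B001C1C1CC6006006006004<00<00<00<006006006006007?=3<2:@32C2C<3=329B32;2;<32?=3=00@:3@<30=309B30303<30?=0<0<0=00:B01313<00?<2<00A@=20B2;0202<20?:@32C2C0@:3@0A@1350050?<3<30<013500505@C0B0C0B0<00=0=009B0B00C0202B0<00=05>0<00=0=00>0<00=05>00?00=00=00>00?00=00=00?9B32;2;9B30303:B01313B2;020250500505?0<00<00?00?0<00<00=@;3;2932;@;3;00303@;0;01313@;2;0020250500505>0<00=0=00>0<00=06><11<1;@13131<1;A13131;C113131311<11?<11=0=1<10=10:B11B002B1002C22C<10><00<0<0;A03030;C03030<00><1<00C@ACC02C13302002<10?=11=1=10@@3B0:2:23B3:0@@3:?<11<10<00<100@@3BA31023002;31102B22B3002310=3C11C11@1C11@1B1B0@22C2@22C2A2A@22@C0C330C@1@0020C2C33@3@1@00AC31102A2A30002310@31B1B02230022022><1<10<00@33AA0:31::0:00:?=11=10=00=10A310230023;11;00:BB0C;10;103;1;00:C:C;10>;C113131311;C11C002C1002B22B;C03030C133020020;2C33:31::0:00:;31C10303103;11;00:B::B0:;10?<11<10<00<100@@3:3;1;00:C:C;103;11;00:C::C0:;10=3@1:1:;1@1;1;110@22;2@22;2A2A@22;@030300@22:2:A:A@22;3102023@1@00:;3102A2A303100@223@;@223:3;:A><11<10<00<100@@3:A310230023;11;00:B::B0:;104<?0>0AC0C08088>0?00A;00808;0>00<?0?02AC0A>00?00;A02020>00<?0>0>0?00A02202330>00<>0>02CA?00A080220>007?0=00=00?0?00=00=007?0AC0022C0022>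00?0?00A;0022;0022>00<AC0C080882AC0A2CA3070070<>0>00>030700707?0=00=00?0?00=00=00?B8080;0;0B80802020B80803030B8080202070707007?00?00<00<00?00?00<00<00<A;00808;0;A02020A02202330A08022070700707=00>00<0=00>00<00<05<>11>1?11>1?119A11A13131@11@A11>11=?11?0?18@10202?108@1102022028@10202=?0?03B@?00@02202330@BB30=?11?0?1?108@102028@10202=?11?1?10B30299293390BB39>3C11C11@1C11@1B1B0@22C2@22C2A2A@22@C0C330C@1@0020C2C33@3@1@00AC31102A2A30002310@31B1B02230022022<?11?10?00?103BB0@831@11@0220202022B31023002<>1>10>03BB0@3CC09391900@09=?11?10?00?103BB09082239A99A8239822B31023002>3C11C1181C1181B1B0C2929C282822823C009C0009B9B8C102020C2C339831020208223C99B8239822831B1B0202022<?11?10?00?103CC09082239@99@823982208239@9@82822=8@11@13131A11A@118@110202202@022023308@10202029929339381@009082239A99A82398228@110202022<>11>10>00>10B3102300208239@9@8282208229AA3@8228228224<>0>0?003CC90?00:A03030>00<>0>0?09A01@1@?009A01@1@>00<>0>02CA?00A080220>00<>0>0?0?009A01313>006>0?00=0>0?00=0=006>0?00CA0@0A0@0>0?00:A0A0@0202A00>00<?00?0?02060600<3CC909A01@1@2CA20606006>0?00=0>0?00=0=00>C80803030C80809018C80802020C8080131360606006?00?00<0?00?00<0<00<:A030309A01@1@A0802209A0131360606006=00>00<00<00=00>00<00<00?5=11=11=11=117117117117117=32=3=2:2@A32@2@;;@;B92;B32;92;@32;7=33=3=30334004004005=11=1=10:@:@;@;@0@;@B;@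;B09;9C;B;909;9C;@;9=511624005161400517=31=3=10@20:3B22;0@@2;7=21=2=10240400=51192@@3@B@B2@2@4005103@2@3@2@40051=511624005161400517511:2@A32@03302035175112@;;@;B4000@20340751192;B32;4000:3B22;404051751192;@32;4000@@2;4005151>72;CC@B:@@:@A:AA:@A;C33C3C3@3B3B1;3@3;3@35115115115116;C223@3A3@A;C22@2C2C22@2B22B;@23A3AC@2@2:2::;3@C23@3@:@:@:AA;3AC223A3AA3;@A;A@:B::B;@;AA7;C33C3C3@3B3B;C33@3C3C33@3B33B0@;3@0334004004005;C11C1C1@1B1B0;C@;@@::C;:A@::;@0C0@0C@1@00:;C10@0@0@::@::@:ACACC;1;10;00:0:A:A@;1B1B0::;00::0::61;@@:;A@:;C22@2C2C22@2B22B0@;2@0224004004007@;3;22B2;0@;3@0@;2@505005071;3@3;3@3;C22@2C2C22@2B22B0@;2@02240040040053C11C11@1C11@1B1B0@22C2@22C2A2A@22@C0C330C@1@0020C2C33@3@1@00AC31102A2A30002310@31B1B0223002202261CC@3C@2@2:2::0C@024040061;@C33:;3@C23@022020202261@:333@:@:@:AA4000@3024061;AC33:;3AC223A3AA4000;2C33:404040075112:@A:A@;B;;B:@:AA4005040051400<7?3?33?35115115115117?3?33?32C8C@8@8@2B8B@8@8@2;8;@8@8;2;8;@8@8;4?00?00?00?007007007007004?00?0?01C8C8@8@@1B88@8@1;88@8@;8;B018184?00?0?02006006006007?3?30?0500500500500?737301;@;@@;@@BB6107013@@BB3@3@@6104?00?0?01B318@@383381BB384?00?0?0206060047001C8C8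@8@@20020207047001B88@8@6001B3206047001;88@8@;860018@@383386060704700;B018186001BB386007070=58@11@1@1C1A11A@112C98AC88A2CC8A711311711711638C@C998AC88@89B8@22@2C2A2A@2@C2C3398@2C2@23C99C99@9@B@B83A@23AC38882A2A39982389@82282398239B9B48@00@0@0C0A00A@008@00@0C0A0A@03CC8070030070070058@11@1@1C1A11A@118@110A0AA0A@C0C090998@10A0A0C9C9@9@@8@10A0A08AAC9A99A8A8A8AA8@110A0A0AA48@00@0C0A0A@018@CA@9@@9@A9AA9@A2C080C0806006006006005@C0C090992@C0@2C@307007063C11C11@1C11@1B1B0@22C2@22C2A2A@22@C0C330C@1@0020C2C33@3@1@00AC31102A2A30002310@31B1B0223002202248@00@0@0C0A00A@002C080C0802CC8070030070070043CC80C80801@182CC80606060057110C9C9@9@@0C9220C2317153118@10A0A28A@0093031310470019AAC8A88A9A9A9AA600700606060057118@110A0A0AA28A@0097028A@00971710<>627335151161721516>2>22>23B8B@8@8@39@9@8@8@3:8:@8@8:39@9@8@8:4>0>00>07003007007004>0>00>01B88@8@9A01@1@:C018189A01@1@4>00>00>00>00600600600600>62730505006072050>61730:1@0@B@B1@@1@6106071031@0@1@0@4>0>00>030700704>0>00>01B33CC18390A11847001B88@8@6001B3206043009A01@1@6003020604700:C018186007003CC18606047009A01@1@60070390A118606047>00?00=00=00>00?00=00=00?=00=00=00=00:A001C1C1CC18;8B;A;89B001;1C1;C9;0C0C1;1C1;C6>00?00=00=00>00?00=00=007?0=00=00?0?00=00=00=?00?00?00?003BB1819AA38A88A93389A3B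301830136>0?00=0>0?00=0=007>00?0?0AC0303C0133133133>00?00:A001313313>00?70018;8B;A;860018B833A386007070=70019AAC8A88A9A9A9AA6007006060600=700:B018186007003BB186060?7009B001;1C1;C600709B001C131C360070600?7009;0C0C1;1C1;C600700930C0C1C131C3600600600=70019A;;8A8A9A9A9;A60070019AA38A88A93389A36060600=700:B001818188600700B30183013600600600?79B332;2;2;;9B33B3B33;CC;C;C:B3313131338B2131351151151151179B332;2;2;;:B33B3B3B3383C3C9B32;2;B822;2;8292;B32;28;;B;B8;92;B332;2;;29;;9;8;C;C9;9;;79B33B3B33;CC;C;C:B33B3B3B3383C3C9B30303:B33B003B3003C33C40040040040049B00B00B00B00;0CC0C0C9B001;1;1;;B8080;0;09B001C1C1CC9B001;1C1;C18;8B;B;89B001;1C1;C9;0CC0C0C1;;1CC1;C1;C4:B00B0B080C0C9B001;1;1;;B808020209B001C1C1CC60060060060079B32;2;9B30303:B01313B2;020250500507:B331313133:B33B003B3003C33C:B01313B133020020:3B22;2;BB0;00;:13B30131332:CC:00;C;;C0;:C078B21313B822;2;82B2;0202B13302002404040049B00B00B00B0030CC0C0C9B001C1C1CCB808030309B0013131339B001C131C318B833B389B001C131C3290080C0C0CC9009009004:B0030303009B001C1C1CCB808020209B001313133600600600600751192;B32;4000:3B22;404051751128;;B;B8;400502;BB0;00;404047009B001;1C1;C600709B001C131C360070600751129;;9;8;C;C9;9;;400502:CC:00;C;;C0;:C040051400<5?11?11?11?117117117117116?22?22?22?22C38882@2@399823893:8:@8@8:;3882@2@39389;3882@2@393894?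00?00?00?007007007007004?00?00?00?0019@@C8@88@9@9@9@@:C0181819@;;8@8@9@9@9;@1:8;8@8@:89@@9;@4?00?00?00?006006006006005?00?00?00?007007007007006?11?10?00?10C31102@2@300023103:1:00@0:;3102@2@30310;3102@2@303104?00?00?00?007007007007004?00?00?00?003CC1819@@38@88@93389@319@38@8@939@34?00?00?00?006060600470019@@C8@88@9@9@9@@60070060606004700:C018186007003CC186060470019@;;8@8@9@9@9;@60070019@@38@88@93389@360606007511:2883@3@2@28@400500:1303@3@13133400400400<79A332@2@;2;9A33A3;3@3@A3:A331313313A;2;1131351151151151179A332@2@;2;9A33A33A33;3@3@3@@A339A332@2@;2;A;2;282822;8;@8@8;92@A332@2@@92@;;3@3@3@@2@;2@@2;;92;A332;2;;49A00A0A0;0@0@A00:A00A008@@8@8@A09A00A03030@00@A00:A0303070070070070049A00A0A0;0@0@A009A001@1@;1;A;00808;09A01@1@1;88@8@;89A01@1@19@;;8@8@9@9@9;@9A001;1@1;@4:A00A008@@8@8@A09A001@1@;1;;A020209A001@1@@1@60060060060079A332@2@;2;9A330303303:A001313313A;2;002025005005005007:A331313313:A33A00A3003@@3@3@A30:A001313313A;1;002022;@;00@0;:13A30131331:33:33;3@3@3@@:33:33:13A30131334A;00808;0;A02020A02202330A080220707007049A00A03030@00@A009A001@1@@1@A022023309A0131318@@38338390A11819@@38@88@93389@39A001@131@34:A030309A01@1@A0802209A01313606060047001;88@8@;860018@@3833860607047009A01@1@60070390A1186060470019@;;8@8@9@9@9;@60070019@@38@88@93389@3606060047009A001;1@1;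@600709A001@131@36007060075=11>11<11<11=11>11<11<11<>32>33>32>222;8;@8@8;92@A332@2@@:2883@3@2@28@92;A332;2;;4=00>00<00<00=00>00<00<005>0<00=0=00>0<00=0><31<30<00<100@@2;A130313022:BB:00;B;;B0;:B04=00>00<0=00>00<00<0>51192;@32;4000@@2;4005151>5112:@A:A@;B;;B:@:AA4005040051400<5112;8;@8@8;4005002;@;00@0;40404<00<0=00B@0303@0133133133<0=009B001313133<00>51192;A332;2;;400500A13031302400400400>51129;;9;8;B;B9;9;;400502:BB:00;B;;B0;:B040051400<511:2883@3@2@28@400500:1303@3@13133400400400<51192;A332;2;;400500:13A30131334040400".
Definition loses_H_5x5 : string :=
  "3@=22B2B2B2279??:449?9?79??:449?9?=22=22@=44B4B4B4459??C4C4?4?9??9??<9??5445454=44=44@=22=44B24B2479??C4?4?9?9?79??A4?4?9?9?=24=24@B2B4B249C2C52:2:9A2A52:2:=24=24@B2B4B246226226226226B22B22@22@22B22B22@22@226B22B227C4544595595959557A45459559595955=22=2=2=226B22B227?454459559595955=22=2=2=226@22@227C454459559595955:C2C27474:CC74?22@22@79??:449?9?<9??544545479??A4?4?9?9?9A2A52:2:6226226226226B22B22=22=22:C2C27474<:229229292=22=226B22B22=2=2:CC74<:29292=22=;2;4@24@2462626226@22@22=22=22@22@22=22=22@6=00=00B00B00800800800800B8794<?>::A7:A>?:A873434344B800<5?>05?803030300B6004<?>::A09?440945660B6007:A>?:A<5?>05?70?>?0?>0::A0:6060B870878009?4470?>?0?340340B8903430094>0::A0:340B600343056603406B00B0B0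30030030030068004C0C0>0>07>00C0:0:>0>0300300808086004A7A:7?7?4A0A05?5?4A7A00<0<4A:A00:0:60606800=0=030030080806800=0=03003008080B6@44@55@45@45844844844844@844<9?9?:47:A>?:A8484:4>4>>A74?:A4?@8440<?>::A84840:40:A44@644<9?9?:4011010164@6557:A>?:A0<?>::A1001010658@44@4@4100100100100@84484840110100@645:4>4>>A0:40110100@64574?:A4?0:A44646510010068440A4A49A9C0A>A77A7C0A4A>4>4>0A4A74<4<848486447:44?4>4>:4:40?4?4:4:410010064648644;4;410010064648644;4;410010064641@=00B0B0B009C0?0?C05??5??5??<9005??5?5?=00=00B@00@0@0;007>005AC5A5C7>005C?5C5?;00;008B00B00@00@00B00B00@00@00@B0B0B00800800800800B@0@0@005A9A22>2>5?9?22>2>;00;00B;00;00@00@0075ACA0C0C5A5C75C??0C0C5C5?;00;00B<9005CC5C5C7>005AC5A5C8008005A9A22>2>75ACA0C0C5A5C8008008B00B005?292297997979799B00B00>??52>?0?052528@00@005C292297997979799;00;0;0;008@00@005A292979979797995?292297997979799;00;0;0;008B00B00B00B00;00;00;00;00;=0=0B00B0080808008@00@00<>05252>??52;0;0;008@00@00<>005225252>?0?05252;00;00;00;00@3=22B2B2B2279??:449?9?79??:449?9?=22=22B8794<?>::A7:A>?:A873434344B844<9?9?:47:A>?:A8484:4>4>>A74?:A4?B822879<9?9?9??:CC7:A:A>??:AA82782929?:>9?7:A:A:AA?ACACACCB<9?9?9??:4C4<?>::A<9?9?:4<9?9?9??:CC<9??4?9?9??4?C??C>4:44::AA:4>44>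9AA:<4C4A<4<CC4ACAACB7:A:A>??:AA7:A>?:A7:A>?:A7:A:A>??:AA<>?2>?>?>2?2?C?C>2::A:A2::2>>A>A2>:7AA7A7A7AA2ACACB3228784827<9??4?9?9??4?C??C<>?2>?>?>2?2?C?C324324B323484829>4:44::AA>2::A:A2:324B3234:4>4>>A29?:>9?:4>44>9AA:2>>A>A2>324B32234474?:A4?7:A:A:AA?ACACACC:<4C4A<4<CC4ACAAC:7AA7A7A7AA2ACAC324324379??:449?9?79??:449?9?79??9??C4?4?4??9??9??9C2C:2:2::C2C424247:44:44C4?4?4??:44:4479?9?9??:4479?9?9??:44379??:449?9?79??:449?9?79??9??A4?4?4??9??9??9A2A:2:2::A2A424247:44:44A4?4?4??:44:4479?9?9??:4479?9?9??:443=22=44=24=24:>2>42424<:2:4C24:2479?9?9??:4479?9?9??:443=22=44=24=24:>2>42424<:2:424?4?:2479?9?9??:4479?9?9??:44;=4A5C??59A5C??5A?5?5C55?553443434344=9A0C??0A?0C0?03003030300B8440?>?<<:<:0?>440?<448484B855800><55<00A??0:<50<509?5?00:0:?A5A0A500<C<C850850=A?5?5C55?55A?0C0?00A:C??<A?5?0C50?50AC55C00:C500:>::>C5<<0:00:?5<<0<00<?A55A00<A500<><<>B3443000?>449?5?00:0:A?55?00:?500:>::>340340B3443000?<44?A5A0A500<C<C?A55A00<A500<C<<C3403408?C44C55C454545>5>4C0C??00C4C??4C?55?0009:9:09?5004::C4C9:9:4::4::C454009?4540094?5>5>?00::0::0::8?A4A545<5<45A45A?04040A?40404A?5?009:9: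?5004::A4A9:9:4::4::04:4:9:<:<4::?45400904::?4?A9<4::4::B3448084850<>55>00:>500:C::C340340=34300C49CC0:C5<<0:00:340=34300?49??0:?5<<0<00<340=3443000?<449?5?00:0:?A55A00<A500<><<>340340=@644655:<44<99ACC4><49<49AC4C9C494>?>?5A4A94>4>645645@6004A>A::>:>0A9440A9446060;5A4C??4A?4C4?40110101011;5A9C??90A9C??9A?9?9C99?991001010100;A?4?9C49?494A:C??<A?4C4?4A?9?9C99?99AC494:C4C994:>::>C4:44:9::?4<44<9<<?A494<A4A994<><<>@AC4C9C494>?>?0A944011100AC494>C4C994>?>>?100100@5A4A94>4>0A944011100AC494:C4C994:>::>1001006AC4C5C4545>5>AC04040AC40404CA5A0A500909<9<04<<A4CA9<4<<4<<C45400904<4<9<C<C4<<4A5>5>A00<<0<<0<<6?C44C55C454545>5>4C0C??00C4C??4C?55?0009:9:09?5004::C4C9:9:4::4::C454009?4540094?5>5>?00::0::0::;5A4A94<4<0A944011100AC494:C4C994:>::>100100;5CC4<0C40110C4:44:9::100;5??4<0?40110?4<44<9<<100@6456064100:<494><4<994>A>>A100100B@6556227:A:A>??:AA<5?5?>??5??7>?>?>???ACACACC25?>:5?652652@6007:A>?:A<5?>05?70?>?0?>0::A0:6060@6557:A>?:A0<?>::A1001010651@00@0@0;007>005AC5A5C7>005C?5C5?;00;00@7:A:A>??:AA7:A>?:A7:A>?:A7:A:A>??:AA<>?2>?>?>2?2?C?C>2::A:A2::2>>A>A2>:7AA7A7A7AA2ACAC@<5?5?>??5??<5?>05?0<?>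::A<5?5?>?05??<>??>00?>?00?C??C>5??0:00::>AA0>00>:<CC<00A<C00ACAAC@7>?>?>???ACACACC70?>?0?100100<>?2>?>?>2?2?C?C<>??>00?>?00?C??C100100@25?>:5?>0::A0:1010>2::A:A2:>5??0:00:100@652601010:2>>A>A2>:>AA0>00>100@6526065100:7AA7A7A7AA2ACAC:<CC<00A<C00ACAAC10010017>005AC5A5C7>005AC5A5C7>00>00A0C0C0CC>00>00>A0A020205A>A22>2>75AC5ACA0C0C0CC5AA5CC75A5A>005AA75C5C>005CC17>005C?5C5?7>005C?5C5?7>00>00?0C0C0CC>00>00>?0?020205?>?22>2>75C?5C??0C0C0CC5CC5??75C5C>005CC75?5?>005??1;00;00<>0>020C0C>00>:0:02020;00;0075A5A>005AA75C5C>005CC1;00;00<>0>0?00>00>:0:02020;00;0075C5C>005CC75?5?>005??18B00B00@00@00B00B00@00@008B00B00@00@00B00B00@00@00=@00@00AC0C0C0040>0>?C00C00C004040>0>AC0C0C0040>0>C<0<04040@00@00=@00@00AC0C0C0020>0>?C00C00C002020>0>AC0C0C0020>0>C<0<02020@00@003B00B00@00@00B00B00@00@003B00B00@00@00B00B00@00@003B00B007C0400490090909007A04049009090900=00=0=0=003B00B007?040049009090900=00=0=0=003@00@007C0400490090909007C04049009090?CC70?00@003@00@007A040490090909007?0400490090909009A0202700700<0<0<?09090@00@00B800800<909040C0C900<>0>020C0C>003003003003003B00B00=0=0?CC70<?09090=003@00@00=0=0?00@00=003@00@00=00=00@00@00=00=001@B0B0B00800800800800@B0B0B00800800800800@B0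B0B009C0C00::0::9A0A00::0::=00=00B@0@0@00>A0A02020>?0?02020>:0:02020>:0:020203B00B00@00@00B00B00@00@003B009C0C020229A00202A0B0=0=0=003B00902202??0B0=0=0=003@009C0C020229C0::9C:?0@03@009A00202A0902202??0A:0909090202:0@0@03B00B0B09C0::A:09090=00=003B00=0=09C:90202:0=003@00=0=0?0@0=003@00=00=00@0@0=00=003@B2B4B24622622622622@B4B0B40600600600600@B2B4B24:C2C42424:A2A42424:>2>42424:>2>42424B@4@0@405A4A44>>4>>5?4?44>>4>>;40;401B00B00@00@00B00B00@00@001B005C2C242445A22424A2B0B052424>2A>052521B00524424??2B0B05?>5?2>>1@005C2C24244:00:0:0@01@005A22424A2524424??2;00;0;0@01B00B0B0:00;00;00;001B00B0B0:0;0;001@0052424>25?>:0;0;001@00A>052525?2>>@0@0;00;0036B22B22@22@22B22B22@22@226B00B00@00@00B00B00@00@00;B22B44C?22?4424:4:24?24A?2?424:4:?24B24B24?<2<42424A?2?4?2424:4:;B44B00C?44?0004:4:04?40A?4?004:4:?40B40B40?<4<00404A?4?0?4004:4:1B00B00@00@00B00B00@00@001B00B00@00@00B00B00@00@001B00B005C2422474474747445A24247447474744B00B00<C052525A2424744744<2<21B00B005?242247447474744B00B00?CC525?242474474741@00@005C242247447474744;00;0;0;001@00@005A242474474747445?242247447474744;00;0;0;001B00B00B00B00;00;00;00;001B00B00B00B00;0;0;001@00@00<C05252?CC52;0;0;00@622600<:2:424?4?:24<545404?4?5441001001001001B<90054454547>005AC5A5C8008005A4A>4>4>75AC4004040800800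B<9005CC5C5C7>005AC5A5C8008005A9A22>2>75ACA0C0C5A5C800800B<9005445454<9005CC5C5C9<00<00A0C0C0CC<00<00>A0A040405A4A94>4><5445CC40CC0C0C54C54C<545C90054C<545C90054CB7>005AC5A5C7>005AC5A5C7>00>00A0C0C0CC>00>00>A0A020205A>A22>2>75AC5ACA0C0C0CC5AA5CC75A5A>005AA75C5C>005CC3B00B007C0400490090909007A04049009090900=00=0=0=003B009C0C020229A00202A0B0=0=0=003B005C2C242445A22424A2B0B052424>2A>052523B00B005C2422474474747445A24247447474744B00B00<C052525A2424744744<2<237C0400490090909009C0C020225C2C242445C24224744747474479005445454790545479054547900544545437A040490090909009A00202A05A22424A25A242474474747447900544545479054547905454790054454543=00B0B0B007900544545479005445454=00=003=0=0B0B0079054547905454=003=0=052424>2<C0525279054547905454=003=00=00A>052525A2424744744<2<27900544545479005445454=00=0063B22B227?454459559595955=22=2=2=228B00407707??0B0B04?>4?0>>8B44047747??4B4B40?>0?4>>8B22B000?797792992929299B20B20>??07>?2?00707=?C44C55C454545>5>4C0C??00C4C??4C?55?0009:9:09?5004::C4C9:9:4::4::C454009?4540094?5>5>?00::0::0::=?C55C22C522525>5>?C00C00707>7>0C7C??70?C77>2::2:2:2::0C7:7:C72::2:2:2C50:0:2?50:0:2?5>5>0::0:0:3B22B002?454450440404044B20B20>??04>?2?004043B22B000?474472442424244B20B20?CC040?4747244242482?595594554545455407707??0047747??40?7977929929292992455099090924509092450909245509909098B42B0B4B2024550990909245090924509098B42B0B4B20245090924509093=2=0>??04?CC04?7470040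4=203=22=00>?2?004040?4747244242407?499244244244244=20=2086@44@222C595594554545455:C4C22929:CC29?42@426@004C0C070774C0::4C:?0@06@440C4C474770C4::0C:?4@41@00@005C292297997979799;00;0;0;00;2C9:9?4::4:4:4::4C7C??7?C44C44747>7>C?22?7729:9:29?2724::C9:9:4:4:24:C94:24:?94:42::?7?7>7>2:2:;?C44C55C454545>5>4C0C??00C4C??4C?55?0009:9:09?5004::C4C9:9:4::4::C454009?4540094?5>5>?00::0::0::1@00@002C0900940040404002C09094004040?CC20?00@001@00@002C090094004040400:C0C02020:CC20?00@0062C5955945545454554C0C070770C4C474770C7977929929292992455099090924509092450909245509909091;00;002C09094004040:C0C0202047C055200200200200;00;001;0;0?CC20:CC20C54522020;006?42?0?4?20245090924509096@42@0@4@2024550990909245090924509093@79??:449?9?<9??544545479??A4?4?9?9?9A2A52:2:622622622622@79??:449?9?<900544545479??04404049A:A00:0:600600600600@79??:449?9?79??:449?9?79??9??A4?4?4??9??9??9A2A:2:2::A2A424247:44:44A4?4?4??:44:4479?9?9??:4479?9?9??:44@<9??5445454<9005445454<9??90004??4?4?9?09?09A5A00:0::A4A004045<44<44A4?4?4??<44<44<54549?0544<54549?05441@00@007A040490090909007?0400490090909009A0202700700<0<0<?09090@00@001@009A00202A0902202??0A:0909090202:0@0@01@005A22424A2524424??2;00;0;0@01@00@005A242474474747445?242247447474744;00;0;0;0017A040490090909009A00202A05A22424A25A2424744747474479005445454790545479054547900544545417?040049009090900902202??0524424??25?24224744747474479005445454790545479054547900544545419A0202700700<0<0A:09090;00;0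07900544545479005445454;00;001<?0909090202:0;0;079054547905454;001@00@0;0;079054547905454;001@00@0@0;007900544545479005445454;00;00B;84482532234459A9A4>4<75A5A>::5AA324324;870878009:4470:>:0:3403408644;4;410010064641;00;00800800;00;00800800;3228784827<9::4:9:9::4:C::C<>:2>:>:>2:2:C:C324324;3448084850<>55>00:>500:C::C340340;59A9A4>4<09:44011100<9::4:9:9::4:C::C1001001;00;00<>0>020C0C>00>:0:02020;00;0075A5A>005AA75C5C>005CC1800800<909040C0C900<>0>020C0C>003003003003001800800>:0:04040>:0:0202030030301;00;00;00;0030030301;00;00;00;003003003003001800800<545C90054C75A5A>005AA30030303001800800:9009009004040C0C75C5C>005CC30030303001;=0=0B00B008080800;=0=0B00B008080800;=0=0B00B00C90904040<909040:0:900=00=;0;0C<0<02020C:0:02020C70522020C5?522020;003B00B00=0=0?CC70<?09090=003B00=0=09C:90202:0=003B00B0B0:0;0;003B00B00B00B00;0;0;003=0=0B0B0079054547905454=003=0=0B0B007905454=003?CC709C::0;07905454;003<?0909090202:0;0;079054547905454;003=00=00;00;00=00=00;00;003=;2;4@24@246262622=;4;0@40@406060600;=2=4?>2>42424?<2<42424?74742424?74742424=24=;4;0@40@40<545404>4>544?54540404;401@00@00=0=0?00@00=001@00=0=0?0@0=001@0052424>25?>:0;0;001@00@00<C05252?CC52;0;0;001=0=052424>2<C0525279054547905454=001=0=05?>?CC527905454=001?00?0:0;07905454;001@00@0;0;079054547905454;001=00=00;00;00=00=00;00;00@3=22=44=24=246226226226226800=0=03003008080=64574>:>4>0:>4464651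00100=65260079?9?:>>9??95?5?0<0:1001001001003=22=44=24=24:>2>42424<:2:424?4?:2479?9?9??:4479?9?9??:44=3443000:>4495?5?0<0::<>><00><>00>A>>A340340=6456064100:<494><4<994>A>>A100100=6526065100:7>>7>7>7>>2>A>A:<>><00><>00>A>>A1001001800800=00=003003003003001800800=00=0030030303622600:>2>42424:>4>0040410010103622600<:2:424?4?:24<545404?4?5441001001001001800800>5445??40?0?4054?75?5?>005??3003030300362260079?9?9??:44<54549?05441001010100".

End Certificates.
Import Certificates.

Lemma board_5x1 : board_outcome 5 1 OutV.
Proof.
split; first by apply: (winsFirst_board wins_V_5x1); vm_compute.
by apply: (losesFirst_board loses_H_5x1); vm_compute.
Qed.

Lemma board_5x2 : board_outcome 5 2 OutH.
Proof.
split; first by apply: (winsFirst_board wins_H_5x2); vm_compute.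
by apply: (losesFirst_board loses_V_5x2); vm_compute.
Qed.

Lemma board_5x3 : board_outcome 5 3 OutV.
Proof.
split; first by apply: (winsFirst_board wins_V_5x3); vm_compute.
by apply: (losesFirst_board loses_H_5x3); vm_compute.
Qed.

Lemma board_5x4 : board_outcome 5 4 OutH.
Proof.
split; first by apply: (winsFirst_board wins_H_5x4); vm_compute.
by apply: (losesFirst_board loses_V_5x4); vm_compute.
Qed.

Lemma board_5x5 : board_outcome 5 5 OutSecond.
Proof.
split; first by apply: (losesFirst_board loses_V_5x5); vm_compute.
by apply: (losesFirst_board loses_H_5x5); vm_compute.
Qed.

Lemma board_5x_even k : board_outcome 5 (2 * k.+1) OutH.
Proof.
elim: k => [|k IH]; first exact: board_5x2.
by rewrite mulnS addnC; apply: board_outcomeH_glue IH (proj2 board_5x2).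
Qed.

Theorem mainTheorem3 :
  board_outcome 5 1 OutV /\ board_outcome 5 3 OutV /\
  board_outcome 5 2 OutH /\ board_outcome 5 4 OutH /\
  board_outcome 5 5 OutSecond /\
  (forall n : nat, 6 <= n -> board_outcome 5 n OutH).
Proof.
split; first exact: board_5x1.
split; first exact: board_5x3.
split; first exact: board_5x2.
split; first exact: board_5x4.
split; first exact: board_5x5.
move=> n n_ge6.
have [k [-> | ->]] : exists k, n = 2 * k.+1 \/ n = 2 * k.+1 + 5.
  exists (n./2 - (if odd n then 3 else 1)).
  by have := odd_double_half n; case: (odd n) => /=; lia.
- exact: board_5x_even.
- exact: board_outcomeH_glue (board_5x_even k) (proj1 board_5x5).
Qed.
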